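(* Let $\gamma\in\{\tfrac12,1,\dots\}$ and $j\in\{-\tfrac12,0,\tfrac12,\dots\}$ with $j>\gamma-1$. For every $M\in\{j+1-\gamma,j+2-\gamma,\dots\}$ let $V_M\subseteq F_\gamma\otimes D^+_j$ be the span of $|\gamma,\mu\rangle\otimes|j,M-\mu\rangle$, $\mu\in\{-\gamma,\dots,\min(\gamma,M-j-1)\}$. Then the restriction $Q_M$ of $Q$ to $V_M$ is diagonalisable with pairwise distinct eigenvalues $-(j+\mu)(j+\mu+1)$, $\mu\in\{-\gamma,\dots,\min(\gamma,M-j-1)\}$. Consequently $Q$ is diagonalisable on $F_\gamma\otimes D^+_j$ (the latter has a basis of $Q$-eigenvectors).
   Context: Let $\mathfrak{spin}(2,1)_{\mathbb C}$ have basis $J_0,J_+,J_-$ with $[J_0,J_\pm]=\pm J_\pm$, $[J_+,J_-]=-2J_0$, and Casimir $Q=-J_0(J_0-1)+J_+J_-$. Set $\Gamma_\pm(j,m)=\mathrm i\sqrt{j\mp m}\,\sqrt{j\pm m+1}$. A module with basis $\{|j,m\rangle\}$ has action $J_0|j,m\rangle=m|j,m\rangle$, $J_\pm|j,m\rangle=\Gamma_\pm(j,m)|j,m\pm1\rangle$. The positive discrete series module $D^+_j$ has basis $|j,m\rangle$, $m\in\{j+1,j+2,\dots\}$; the finite-dimensional module $F_\gamma$ has basis $|\gamma,\mu\rangle$, $\mu\in\{-\gamma,\dots,\gamma\}$. On a (algebraic) tensor product the generators act as $J_0\otimes1+1\otimes J_0$, $J_\pm\otimes1+1\otimes J_\pm$;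 the $V_M$ are the $J_0$-eigenspaces and are $Q$-invariant. *)

(* Complex scalars: algC (algebraic complex numbers);
   half-integer labels j, m, mu, M are rationals. *)
From HB Require Import structures.
From mathcomp Require Import all_boot all_order all_algebra all_field.
Set Implicit Arguments. Unset Strict Implicit. Unset Printing Implicit Defensive.
Import Order.TTheory GRing.Theory Num.Theory.
Local Open Scope ring_scope.

(* Coefficient vectors of a module with basis |l,m>, m : rat
   (v m = coefficient of |l,m>), and of the tensor product
   (w mu m = coefficient of |gamma,mu> (x) |j,m>). *)
Definition vec := rat -> algC.
Definition tvec := rat -> rat -> algC.

Definition Gp (l m : rat) : algC :=
  'i * sqrtC (ratr (l - m)) * sqrtC (ratr (l + m + 1)).
Definition Gm (l m : rat) : algC :=
  'i * sqrtC (ratr (l + m)) * sqrtC (ratr (l - m + 1)).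

Definition Fbas (gam mu : rat) : bool :=
  (- gam <= mu <= gam) && ((mu + gam) \is a Num.int).
Definition Dbas (j m : rat) : bool :=
  (j + 1 <= m) && ((m - j) \is a Num.int).

(* Action of J0, J+, J- on a module with label l and basis index set B,
   in coefficient form: J0|l,m> = m|l,m>, J+-|l,m> = Gamma+-(l,m)|l,m+-1>. *)
Definition opJ0 (B : pred rat) (v : vec) : vec :=
  fun m => if B m then ratr m * v m else 0.
Definition opJp (l : rat) (B : pred rat) (v : vec) : vec :=
  fun m => if B m && B (m - 1) then Gp l (m - 1) * v (m - 1) else 0.
Definition opJm (l : rat) (B : pred rat) (v : vec) : vec :=
  fun m => if B m && B (m + 1) then Gm l (m + 1) * v (m + 1) else 0.

(* A (x) 1 and 1 (x) A on the tensor product *)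
Definition lft (A : vec -> vec) (w : tvec) : tvec :=
  fun mu m => A (fun mu' => w mu' m) mu.
Definition rgt (A : vec -> vec) (w : tvec) : tvec :=
  fun mu m => A (w mu) m.
Definition addop (A B : tvec -> tvec) (w : tvec) : tvec :=
  fun mu m => A w mu m + B w mu m.

Definition TJ0 (gam j : rat) := addop (lft (opJ0 (Fbas gam))) (rgt (opJ0 (Dbas j))).
Definition TJp (gam j : rat) := addop (lft (opJp gam (Fbas gam))) (rgt (opJp j (Dbas j))).
Definition TJm (gam j : rat) := addop (lft (opJm gam (Fbas gam))) (rgt (opJm j (Dbas j))).

Definition TQ (gam j : rat) (w : tvec) : tvec :=
  fun mu m => - TJ0 gam j (fun a b => TJ0 gam j w a b - w a b) mu m
              + TJp gam j (TJm gam j w) mu m.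

Definition tzero : tvec := fun _ _ => 0.
Definition tscale (c : algC) (w : tvec) : tvec := fun mu m => c * w mu m.

(* elements of the algebraic tensor product: finitely supported,
   supported on the basis indices *)
Definition in_tensor (gam j : rat) (w : tvec) : Prop :=
  (forall mu m, w mu m != 0 -> Fbas gam mu && Dbas j m) /\
  exists s : seq (rat * rat), forall mu m, w mu m != 0 -> (mu, m) \in s.

Definition ebas (mu0 m0 : rat) : tvec :=
  fun mu m => if (mu == mu0) && (m == m0) then 1 else 0.

Definition lincomb (I : Type) (s : seq I) (c : I -> algC) (f : I -> tvec) : tvec :=
  fun mu m => \sum_(i <- s) c i * f i mu m.

Definition halfq (g : nat) : rat := g%:R / 2.

Definition VM_idx (g : nat) (j M : rat) : seq rat :=
  [seq mu <- [seq - halfq g + k%:R | k <- iota 0 g.+1] | mu <= M - j - 1].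

Definition in_VM (g : nat) (j M : rat) (w : tvec) : Prop :=
  exists c : rat -> algC, w = lincomb (VM_idx g j M) c (fun mu => ebas mu (M - mu)).

Definition lam (j mu : rat) : algC := - ratr ((j + mu) * (j + mu + 1)).

Definition validM (g : nat) (j M : rat) : bool := (M - (j + 1 - halfq g)) \is a Num.nat.

(* For each admissible mu the space V_(j+mu+1) contains a nonzero vector annihilated by J_-
   (its coefficients obey a two-term recursion), on which Q = -J0(J0-1) + J+J- acts by
   -(j+mu+1)(j+mu).  Q commutes with J_+, so J_+^k of it is a Q-eigenvector in V_(j+mu+1+k)
   with the same eigenvalue, and its coefficient on |gamma,-gamma> (x) |j,M+gamma> stays
   nonzero since Gamma_+ does not vanish on D^+_j.  In V_M this gives one eigenvector per mu;
   j > gamma - 1 makes the eigenvalues pairwise distinct, so they are independent, and being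
   dim V_M many they form a basis.  The tensor product is the direct sum of the V_M. *)

From HB Require Import structures.
From mathcomp Require Import all_boot all_order all_algebra all_field.
From mathcomp Require Import ring lra.
From Stdlib Require Import FunctionalExtensionality.
Set Implicit Arguments. Unset Strict Implicit. Unset Printing Implicit Defensive.
Import Order.TTheory GRing.Theory Num.Theory.
Local Open Scope ring_scope.

(** * Operators on the tensor product *)

Lemma tvecP (w1 w2 : tvec) : (forall a b, w1 a b = w2 a b) -> w1 = w2.
Proof.
move=> eq_w; apply: functional_extensionality => a.
exact: functional_extensionality.
Qed.

Fact tadd_key : unit. Proof. exact: tt. Qed.
Definition tadd : tvec -> tvec -> tvec :=
  locked_with tadd_key (fun (w1 w2 : tvec) (a b : rat) => w1 a b + w2 a b).
Canonical tadd_unlockable := [unlockable fun tadd].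

Lemma taddE w1 w2 a b : tadd w1 w2 a b = w1 a b + w2 a b.
Proof. by rewrite unlock. Qed.
Lemma tscaleE c w a b : tscale c w a b = c * w a b. Proof. by []. Qed.

Lemma opJ0E B v m : opJ0 B v m = (if B m then ratr m else 0) * v m.
Proof. by rewrite /opJ0; case: (B m); rewrite ?mul0r. Qed.
Lemma opJpE l B v m :
  opJp l B v m = (if B m && B (m - 1) then Gp l (m - 1) else 0) * v (m - 1).
Proof. by rewrite /opJp; case: (_ && _); rewrite ?mul0r. Qed.
Lemma opJmE l B v m :
  opJm l B v m = (if B m && B (m + 1) then Gm l (m + 1) else 0) * v (m + 1).
Proof. by rewrite /opJm; case: (_ && _); rewrite ?mul0r. Qed.

Lemma lftE A w a b : lft A w a b = A (fun a' => w a' b) a. Proof. by []. Qed.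
Lemma rgtE A w a b : rgt A w a b = A (w a) b. Proof. by []. Qed.
Lemma addopE A B w a b : addop A B w a b = A w a b + B w a b. Proof. by []. Qed.

Ltac unfold_ops := rewrite /TJ0 /TJp /TJm;
  repeat progress (rewrite ?addopE ?lftE ?rgtE ?opJ0E ?opJpE ?opJmE ?taddE ?tscaleE;
                   cbv beta).

Section Generators.
Variables (gam j : rat).

Lemma TJ0D w1 w2 : TJ0 gam j (tadd w1 w2) = tadd (TJ0 gam j w1) (TJ0 gam j w2).
Proof. by apply: tvecP => a b; unfold_ops; ring. Qed.
Lemma TJ0Z c w : TJ0 gam j (tscale c w) = tscale c (TJ0 gam j w).
Proof. by apply: tvecP => a b; unfold_ops; ring. Qed.
Lemma TJpD w1 w2 : TJp gam j (tadd w1 w2) = tadd (TJp gam j w1) (TJp gam j w2).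
Proof. by apply: tvecP => a b; unfold_ops; ring. Qed.
Lemma TJpZ c w : TJp gam j (tscale c w) = tscale c (TJp gam j w).
Proof. by apply: tvecP => a b; unfold_ops; ring. Qed.
Lemma TJmD w1 w2 : TJm gam j (tadd w1 w2) = tadd (TJm gam j w1) (TJm gam j w2).
Proof. by apply: tvecP => a b; unfold_ops; ring. Qed.
Lemma TJmZ c w : TJm gam j (tscale c w) = tscale c (TJm gam j w).
Proof. by apply: tvecP => a b; unfold_ops; ring. Qed.

Lemma TQE w : TQ gam j w =
  tadd (tscale (-1) (TJ0 gam j (tadd (TJ0 gam j w) (tscale (-1) w))))
       (TJp gam j (TJm gam j w)).
Proof.
apply: tvecP => a b; rewrite /TQ taddE tscaleE mulN1r.
congr (- TJ0 gam j _ a b + _).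
by apply: tvecP => x y; rewrite taddE tscaleE mulN1r.
Qed.

Lemma TQD w1 w2 : TQ gam j (tadd w1 w2) = tadd (TQ gam j w1) (TQ gam j w2).
Proof.
rewrite !TQE !(TJ0D, TJ0Z, TJpD, TJmD).
by apply: tvecP => a b; rewrite !(taddE, tscaleE); ring.
Qed.

Lemma TQZ c w : TQ gam j (tscale c w) = tscale c (TQ gam j w).
Proof.
rewrite !TQE !(TJ0D, TJ0Z, TJpZ, TJmZ).
by apply: tvecP => a b; rewrite !(taddE, tscaleE); ring.
Qed.

Lemma TJ0_TJp w : TJ0 gam j (TJp gam j w) = tadd (TJp gam j (TJ0 gam j w)) (TJp gam j w).
Proof.
apply: tvecP => a b; unfold_ops; rewrite ?subrK.
case: (Fbas gam a); case: (Fbas gam (a - 1)); case: (Dbas j b); case: (Dbas j (b - 1));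
  rewrite /= ?rmorphB ?rmorph1; ring.
Qed.

End Generators.

Lemma Gp_Gm l m : Gp l (m - 1) * Gm l m = - ratr ((l - m + 1) * (l + m)).
Proof.
rewrite /Gp /Gm.
have -> : l - (m - 1) = l - m + 1 by ring.
have -> : l + (m - 1) + 1 = l + m by ring.
set s1 := sqrtC _; set s2 := sqrtC _.
have -> : 'i * s1 * s2 * ('i * s2 * s1) = 'i ^+ 2 * s1 ^+ 2 * s2 ^+ 2 by ring.
by rewrite sqrCi !sqrtCK rmorphM; ring.
Qed.

Lemma Gm_Gp l m : Gm l (m + 1) * Gp l m = - ratr ((l + m + 1) * (l - m)).
Proof.
have := Gp_Gm l (m + 1); rewrite addrK mulrC => ->.
by congr (- ratr _); ring.
Qed.

Lemma guarded_Gp_Gm l (B : pred rat) m :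
    (B m -> ~~ B (m - 1) -> (l - m + 1) * (l + m) = 0) ->
  (if B m && B (m - 1) then Gp l (m - 1) else 0) * (if B (m - 1) && B m then Gm l m else 0)
  = if B m then - ratr ((l - m + 1) * (l + m)) else 0.
Proof.
case: (B m); case: (B (m - 1)) => //= end_m; rewrite ?mul0r ?mulr0 ?Gp_Gm //.
by rewrite end_m // rmorph0 oppr0.
Qed.

Lemma guarded_Gm_Gp l (B : pred rat) m :
    (B m -> ~~ B (m + 1) -> (l + m + 1) * (l - m) = 0) ->
  (if B m && B (m + 1) then Gm l (m + 1) else 0) * (if B (m + 1) && B m then Gp l m else 0)
  = if B m then - ratr ((l + m + 1) * (l - m)) else 0.
Proof.
case: (B m); case: (B (m + 1)) => //= end_m; rewrite ?mul0r ?mulr0 ?Gm_Gp //.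
by rewrite end_m // rmorph0 oppr0.
Qed.

Lemma intr_gtN1_ge0 (x : rat) : x \is a Num.int -> -1 < x -> 0 <= x.
Proof.
move=> xi x_gtN1; rewrite leNgt; apply/negP => x_lt0.
have := norm_intr_ge1 xi (ltr0_neq0 x_lt0).
rewrite ltr0_norm //; lra.
Qed.

Lemma intr_ge0_lt1 (x : rat) : x \is a Num.int -> 0 <= x -> x < 1 -> x = 0.
Proof.
move=> xi x_ge0 x_lt1.
have : 0 <= - x by apply: intr_gtN1_ge0; [rewrite rpredN | lra].
lra.
Qed.

Lemma halfqD g : halfq g + halfq g = g%:R.
Proof. by rewrite /halfq; field. Qed.

Lemma Fbas_bottom gam a : Fbas gam a -> ~~ Fbas gam (a - 1) -> gam + a = 0.
Proof.
rewrite /Fbas => /andP [/andP [a_ge a_le] ai] not_prev.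
apply: intr_ge0_lt1; rewrite ?(addrC gam) //; first lra.
rewrite ltNge; apply/negP => a_ge1; move/negP: not_prev; apply.
rewrite (_ : a - 1 + gam = a + gam - 1); last by ring.
by rewrite rpredB // andbT; apply/andP; split; lra.
Qed.

Lemma Fbas_top g a : Fbas (halfq g) a -> ~~ Fbas (halfq g) (a + 1) -> halfq g - a = 0.
Proof.
rewrite /Fbas => /andP [/andP [a_ge a_le] ai] not_next; apply: intr_ge0_lt1.
- rewrite (_ : halfq g - a = g%:R - (a + halfq g)); last by rewrite -halfqD; ring.
  by rewrite rpredB // natr_int.
- lra.
rewrite ltNge; apply/negP => a_le1; move/negP: not_next; apply.
rewrite (_ : a + 1 + halfq g = a + halfq g + 1); last by ring.
by rewrite rpredD // andbT; apply/andP; split; lra.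
Qed.

Lemma Dbas_bottom j m : Dbas j m -> ~~ Dbas j (m - 1) -> j - m + 1 = 0.
Proof.
rewrite /Dbas => /andP [m_ge mi] not_prev.
suff : m - j - 1 = 0 by lra.
apply: intr_ge0_lt1; [exact: rpredB mi (rpred1 _) | lra |].
rewrite ltNge; apply/negP => m_ge1; move/negP: not_prev; apply.
rewrite (_ : m - 1 - j = m - j - 1); last by ring.
by rewrite rpredB // andbT; lra.
Qed.

Lemma DbasS j m : Dbas j m -> Dbas j (m + 1).
Proof.
rewrite /Dbas => /andP [m_ge mi]; rewrite (_ : m + 1 - j = m - j + 1); last by ring.
by rewrite rpredD // andbT; lra.
Qed.

(* Boundary terms vanish because the index sets are those of genuine modules:
   [Gamma] vanishes exactly at both ends of [F_gamma] and at the bottom of [D^+_j]. *)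
Lemma TJp_TJm g j w : TJp (halfq g) j (TJm (halfq g) j w) =
  tadd (TJm (halfq g) j (TJp (halfq g) j w)) (tscale (-2) (TJ0 (halfq g) j w)).
Proof.
apply: tvecP => a b; unfold_ops; rewrite ?subrK ?addrK !mulrDr !mulrA.
rewrite guarded_Gp_Gm; last by move=> Fa Fa'; rewrite (Fbas_bottom Fa Fa') mulr0.
rewrite guarded_Gp_Gm; last by move=> Db Db'; rewrite (Dbas_bottom Db Db') mul0r.
rewrite guarded_Gm_Gp; last by move=> Fa Fa'; rewrite (Fbas_top Fa Fa') mulr0.
rewrite guarded_Gm_Gp; last by move=> Db; rewrite DbasS.
case: (Fbas (halfq g) a); case: (Fbas (halfq g) (a - 1)); case: (Fbas (halfq g) (a + 1));
case: (Dbas j b); case: (Dbas j (b - 1)); case: (Dbas j (b + 1));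
  rewrite /= ?rmorphM ?rmorphB ?rmorphD ?rmorph1; ring.
Qed.

Lemma TJm_TJp g j w : TJm (halfq g) j (TJp (halfq g) j w) =
  tadd (TJp (halfq g) j (TJm (halfq g) j w)) (tscale 2 (TJ0 (halfq g) j w)).
Proof.
apply: tvecP => a b; have := congr1 (fun f => f a b) (TJp_TJm g j w).
by rewrite /= !taddE !tscaleE => ->; ring.
Qed.

Lemma TQ_TJp g j w : TQ (halfq g) j (TJp (halfq g) j w) = TJp (halfq g) j (TQ (halfq g) j w).
Proof.
rewrite !TQE TJ0_TJp TJm_TJp !(TJ0D, TJ0Z, TJpD, TJpZ, TJmD, TJmZ, TJ0_TJp).
by apply: tvecP => a b; rewrite !(taddE, tscaleE); ring.
Qed.

(** * Index sets and the spaces V_M *)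

Lemma FbasP g a :
  reflect (exists2 k, (k <= g)%N & a = - halfq g + k%:R) (Fbas (halfq g) a).
Proof.
have g_eq := halfqD g; apply: (iffP idP) => [|[k k_le ->]].
  rewrite /Fbas => /andP [/andP [a_ge a_le] ai].
  have /natrP [k k_eq] : a + halfq g \is a Num.nat by rewrite natrEint ai /=; lra.
  exists k; last by rewrite -k_eq; ring.
  by rewrite -(ler_nat rat) -k_eq -g_eq; lra.
rewrite /Fbas (_ : - halfq g + k%:R + halfq g = k%:R); last by ring.
have k_le' : (k%:R <= g%:R :> rat) by rewrite ler_nat.
have k_ge0 : (0 <= k%:R :> rat) := ler0n _ _.
by rewrite natr_int andbT; apply/andP; split; lra.
Qed.

Lemma Fbas_succ g a : Fbas (halfq g) a -> a + 1 <= halfq g -> Fbas (halfq g) (a + 1).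
Proof.
rewrite /Fbas => /andP [/andP [a_ge _] ai] a_lt.
rewrite (_ : a + 1 + halfq g = a + halfq g + 1); last by ring.
by rewrite rpredD // andbT; apply/andP; split; lra.
Qed.

Lemma mem_VM_idx g j M a :
  (a \in VM_idx g j M) = Fbas (halfq g) a && (a <= M - j - 1).
Proof.
rewrite /VM_idx mem_filter andbC; congr (_ && _).
apply/mapP/FbasP => [[k]|[k k_le ->]].
  by rewrite mem_iota add0n ltnS => k_le ->; exists k.
by exists k; rewrite // mem_iota add0n ltnS.
Qed.

Lemma VM_idx_uniq g j M : uniq (VM_idx g j M).
Proof.
rewrite filter_uniq // map_inj_uniq ?iota_uniq // => k k' /addrI /eqP.
by rewrite eqr_nat => /eqP.
Qed.

Lemma VM_idx_Dbas g j M a : validM g j M -> a \in VM_idx g j M -> Dbas j (M - a).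
Proof.
rewrite /validM mem_VM_idx => M_valid /andP [/andP [_ ai] a_le].
rewrite /Dbas (_ : M - a - j = M - (j + 1 - halfq g) - (a + halfq g) + 1); last by ring.
by rewrite (rpredD (rpredB (intr_nat M_valid) ai)) ?rpred1 // andbT; lra.
Qed.

Lemma validM_lowest g j mu : Fbas (halfq g) mu -> validM g j (j + mu + 1).
Proof.
move=> /andP [/andP [mu_ge _] mui].
rewrite /validM (_ : j + mu + 1 - (j + 1 - halfq g) = mu + halfq g); last by ring.
by rewrite natrEint mui /=; lra.
Qed.

Definition diag_supp (s : seq rat) (M : rat) (w : tvec) :=
  forall a b, w a b != 0 -> (a \in s) && (b == M - a).

Section DiagSupport.
Variables (s : seq rat) (M : rat) (w : tvec).
Hypothesis w_diag : diag_supp s M w.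

Lemma diag_supp_offl a : a \notin s -> forall b, w a b = 0.
Proof. by move=> a_out b; apply/eqP; apply: contraNT a_out => /w_diag /andP []. Qed.

Lemma diag_supp_offd a b : b != M - a -> w a b = 0.
Proof. by move=> b_neq; apply/eqP; apply: contraNT b_neq => /w_diag /andP []. Qed.

End DiagSupport.

Lemma lincomb_ebasE (s : seq rat) M c a b : uniq s ->
  lincomb s c (fun mu => ebas mu (M - mu)) a b =
  if (a \in s) && (b == M - a) then c a else 0.
Proof.
move=> s_uniq; rewrite /lincomb; case: ifP => [/andP [a_s /eqP ->] | a_off].
  rewrite (big_rem a) //= /ebas !eqxx mulr1 big1_seq ?addr0 // => i /andP [_ i_s].
  case: eqP => [ai|]; last by rewrite mulr0.
  by move: i_s; rewrite -ai mem_rem_uniqF.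
rewrite big1_seq // => i /andP [_ i_s]; rewrite /ebas.
case: eqP => [ai|]; last by rewrite mulr0.
case: eqP => [bi|]; last by rewrite mulr0.
by move: a_off; rewrite ai bi i_s eqxx.
Qed.

Lemma in_VMP g j M w : in_VM g j M w <-> diag_supp (VM_idx g j M) M w.
Proof.
split=> [[c ->] a b | w_diag].
  by rewrite lincomb_ebasE ?VM_idx_uniq //; case: ifP => //; rewrite eqxx.
exists (fun a => w a (M - a)); apply: tvecP => a b.
rewrite lincomb_ebasE ?VM_idx_uniq //; case: ifP => [/andP [_ /eqP -> //] | off].
by apply/eqP; apply: contraFT off; apply: w_diag.
Qed.

Lemma TJ0_diag g j M w : validM g j M -> diag_supp (VM_idx g j M) M w ->
  TJ0 (halfq g) j w = tscale (ratr M) w.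
Proof.
move=> M_valid w_diag; apply: tvecP => a b; unfold_ops.
have [/eqP -> | /w_diag /andP [a_in /eqP ->]] := boolP (w a b == 0).
  by rewrite !mulr0 addr0.
have := a_in; rewrite mem_VM_idx => /andP [-> _].
rewrite (VM_idx_Dbas M_valid a_in) -mulrDl -rmorphD; congr (ratr _ * _); ring.
Qed.

Lemma TJp_diag g j M w : diag_supp (VM_idx g j M) M w ->
  diag_supp (VM_idx g j (M + 1)) (M + 1) (TJp (halfq g) j w).
Proof.
move=> w_diag a b; unfold_ops; apply: contraNT => off.
have -> : w a (b - 1) = 0.
  apply/eqP; apply: contraNT off => /w_diag /andP [].
  rewrite !mem_VM_idx => /andP [-> a_le] /eqP b_eq /=; apply/andP; split; first lra.
  by apply/eqP; rewrite -[b](subrK 1) b_eq; ring.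
case Fa: (Fbas (halfq g) a); last by rewrite /= mul0r mulr0 addr0.
suff -> : w (a - 1) b = 0 by rewrite !mulr0 addr0.
apply/eqP; apply: contraNT off => /w_diag /andP [].
rewrite !mem_VM_idx Fa => /andP [_ a_le] /eqP b_eq /=; apply/andP; split; first lra.
by apply/eqP; rewrite b_eq; ring.
Qed.

Lemma validM_sum g j a b : Fbas (halfq g) a -> Dbas j b -> validM g j (a + b).
Proof.
move=> /andP [/andP [a_ge _] ai] /andP [b_ge bi].
rewrite /validM natrEint (_ : a + b - (j + 1 - halfq g) = a + halfq g + (b - j) - 1); last by ring.
by rewrite (rpredB (rpredD ai bi)) ?rpred1 //=; lra.
Qed.

Lemma diag_in_tensor g j M w : validM g j M -> diag_supp (VM_idx g j M) M w ->
  in_tensor (halfq g) j w.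
Proof.
move=> M_valid w_diag; split=> [a b /w_diag /andP [a_in /eqP ->] | ].
  by rewrite (VM_idx_Dbas M_valid a_in) andbT; move: a_in; rewrite mem_VM_idx => /andP [].
exists [seq (a, M - a) | a <- VM_idx g j M] => a b /w_diag /andP [a_in /eqP ->].
by apply/mapP; exists a.
Qed.

(** * Lowest weight vectors and their J_+ descendants *)

Lemma Gm_neq0 l m : l + m != 0 -> l - m + 1 != 0 -> Gm l m != 0.
Proof. by move=> ? ?; rewrite /Gm !mulf_neq0 ?neq0Ci // sqrtC_eq0 fmorph_eq0. Qed.

Lemma Gp_neq0 l m : l - m != 0 -> l + m + 1 != 0 -> Gp l m != 0.
Proof. by move=> ? ?; rewrite /Gp !mulf_neq0 ?neq0Ci // sqrtC_eq0 fmorph_eq0. Qed.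

(* Coefficient of |gamma, -gamma + k> (x) |j, M + gamma - k> in the lowest weight vector of
   V_M; the recursion makes the two contributions to its image under J_- cancel. *)
Fixpoint lw_coef (g : nat) (j M : rat) (k : nat) : algC :=
  if k is k'.+1 then
    - Gm j (M - (- halfq g + k'%:R)) / Gm (halfq g) (- halfq g + k'.+1%:R)
      * lw_coef g j M k'
  else 1.

Definition lowest_vec (g : nat) (j M : rat) : tvec := fun a b =>
  if (a \in VM_idx g j M) && (b == M - a) then lw_coef g j M (Num.truncn (a + halfq g))
  else 0.

Lemma lowest_vec_diag g j M : diag_supp (VM_idx g j M) M (lowest_vec g j M).
Proof. by move=> a b; rewrite /lowest_vec; case: ifP => //; rewrite eqxx. Qed.

Lemma lowest_vec_grid g j M k : - halfq g + k%:R \in VM_idx g j M ->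
  lowest_vec g j M (- halfq g + k%:R) (M - (- halfq g + k%:R)) = lw_coef g j M k.
Proof. by move=> k_in; rewrite /lowest_vec k_in eqxx addrAC addNr add0r natrK. Qed.

Lemma lowest_vec_cancel g j M k :
    - halfq g + k%:R \in VM_idx g j M -> - halfq g + k.+1%:R \in VM_idx g j M ->
  Gm (halfq g) (- halfq g + k.+1%:R) *
    lowest_vec g j M (- halfq g + k.+1%:R) (M - (- halfq g + k.+1%:R)) +
  Gm j (M - (- halfq g + k%:R)) * lowest_vec g j M (- halfq g + k%:R) (M - (- halfq g + k%:R))
  = 0.
Proof.
move=> k_in k1_in; rewrite !lowest_vec_grid //=; field.
move: k1_in; rewrite mem_VM_idx => /andP [/andP [/andP [_ k1_le] _] _].
have k1_gt0 : (0 < k.+1%:R :> rat) := ltr0Sn _ _.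
by apply: Gm_neq0; apply: lt0r_neq0; lra.
Qed.

Lemma TJm_lowest_vec g j mu : Fbas (halfq g) mu ->
  TJm (halfq g) j (lowest_vec g j (j + mu + 1)) = tzero.
Proof.
move=> Fmu; set M := j + mu + 1; set w := lowest_vec g j M.
have w_diag : diag_supp (VM_idx g j M) M w := @lowest_vec_diag g j M.
have M_valid := validM_lowest j Fmu.
have mem_VM a : (a \in VM_idx g j M) = Fbas (halfq g) a && (a <= mu).
  by rewrite mem_VM_idx /M (_ : j + mu + 1 - j - 1 = mu) //; ring.
have mu_le : mu <= halfq g by case/andP: Fmu => /andP [].
apply: tvecP => a b; unfold_ops; rewrite /tzero.
have [b_eq | b_neq] := eqVneq b (M - (a + 1)); last first.
  rewrite (diag_supp_offd w_diag b_neq) (diag_supp_offd w_diag (b := b + 1)) ?mulr0 ?addr0 //.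
  by apply: contra_neq b_neq => b_eq; rewrite -[b](addrK 1) b_eq; ring.
rewrite b_eq (_ : M - (a + 1) + 1 = M - a); last by ring.
have [a1_in | a1_out] := boolP (a + 1 \in VM_idx g j M); last first.
  rewrite (diag_supp_offl w_diag a1_out) mulr0 add0r.
  case Db: (Dbas j (M - (a + 1))); last by rewrite mul0r.
  rewrite (diag_supp_offl w_diag) ?mulr0 //; apply: contra a1_out.
  move: Db => /andP [b_ge _]; rewrite /M in b_ge; rewrite !mem_VM => /andP [Fa _].
  by rewrite Fbas_succ //=; lra.
have Db := VM_idx_Dbas M_valid a1_in.
have Db1 : Dbas j (M - a).
  by rewrite (_ : M - a = M - (a + 1) + 1); [exact: DbasS | ring].
rewrite Db Db1 andbT.
case Fa: (Fbas (halfq g) a); last first.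
  by rewrite /= mul0r add0r (diag_supp_offl w_diag (a := a)) ?mulr0 // mem_VM Fa.
have /FbasP [k _ a_eq] := Fa; subst a.
have k_in : - halfq g + k%:R \in VM_idx g j M.
  by move: (a1_in); rewrite !mem_VM Fa => /andP [_ k1_le] /=; lra.
rewrite (_ : - halfq g + k%:R + 1 = - halfq g + k.+1%:R) in a1_in *; last first.
  by rewrite -natr1 addrA.
move: (a1_in); rewrite mem_VM => /andP [-> _] /=.
exact: lowest_vec_cancel.
Qed.

Lemma TJp0 gam j : TJp gam j tzero = tzero.
Proof. by apply: tvecP => a b; unfold_ops; rewrite /tzero !mulr0 addr0. Qed.

Lemma TQ_lowest_vec g j mu : Fbas (halfq g) mu ->
  TQ (halfq g) j (lowest_vec g j (j + mu + 1)) =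
  tscale (lam j mu) (lowest_vec g j (j + mu + 1)).
Proof.
move=> Fmu.
have J0_w := TJ0_diag (validM_lowest j Fmu) (@lowest_vec_diag g j (j + mu + 1)).
rewrite TQE TJm_lowest_vec // TJp0 !(TJ0D, TJ0Z, J0_w).
apply: tvecP => a b; rewrite !(taddE, tscaleE) /tzero /lam.
by rewrite !rmorphM !rmorphD !rmorph1; ring.
Qed.

Lemma lowest_vec_bottom g j mu : Fbas (halfq g) mu ->
  lowest_vec g j (j + mu + 1) (- halfq g) (j + mu + 1 + halfq g) = 1.
Proof.
move=> /andP [/andP [mu_ge _] _].
have := @lowest_vec_grid g j (j + mu + 1) 0; rewrite addr0 opprK; apply.
rewrite mem_VM_idx (_ : j + mu + 1 - j - 1 = mu); last by ring.
have g_ge0 : 0 <= halfq g by rewrite /halfq divr_ge0 ?ler0n.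
by apply/andP; split; [apply/FbasP; exists 0%N; rewrite ?addr0 | lra].
Qed.

Lemma TQ_iter_TJp g j l w k : TQ (halfq g) j w = tscale l w ->
  TQ (halfq g) j (iter k (TJp (halfq g) j) w) = tscale l (iter k (TJp (halfq g) j) w).
Proof. by move=> Qw; elim: k => [|k IH] //=; rewrite TQ_TJp IH TJpZ. Qed.

Lemma iter_TJp_diag g j M w k : diag_supp (VM_idx g j M) M w ->
  diag_supp (VM_idx g j (M + k%:R)) (M + k%:R) (iter k (TJp (halfq g) j) w).
Proof.
move=> w_diag; elim: k => [|k IH]; first by rewrite addr0.
by rewrite iterS -natr1 addrA; apply: TJp_diag.
Qed.

Lemma Fbas_below gam : Fbas gam (- gam - 1) = false.
Proof. by rewrite /Fbas (_ : - gam <= - gam - 1 = false) //; apply/negbTE; rewrite -ltNge; lra. Qed.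

Lemma TJp_bottom g j w m : Dbas j m ->
  TJp (halfq g) j w (- halfq g) (m + 1) = Gp j m * w (- halfq g) m.
Proof. by move=> Dm; unfold_ops; rewrite Fbas_below andbF mul0r add0r addrK Dm DbasS. Qed.

Lemma Gp_Dbas_neq0 j m : - (1 / 2) <= j -> Dbas j m -> Gp j m != 0.
Proof.
by move=> j_ge /andP [m_ge _]; apply: Gp_neq0; [apply: ltr0_neq0 | apply: lt0r_neq0]; lra.
Qed.

Lemma iter_TJp_bottom g j w m k : - (1 / 2) <= j -> Dbas j m -> w (- halfq g) m != 0 ->
  iter k (TJp (halfq g) j) w (- halfq g) (m + k%:R) != 0.
Proof.
move=> j_ge Dm w_neq0; elim: k => [|k IH]; first by rewrite addr0.
have Dmk : Dbas j (m + k%:R).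
  by elim: k {IH} => [|k Dmk]; rewrite ?addr0 // -natr1 addrA DbasS.
by rewrite iterS -natr1 addrA TJp_bottom // mulf_neq0 // Gp_Dbas_neq0.
Qed.

Definition eigen_vec (g : nat) (j M mu : rat) : tvec :=
  iter (Num.truncn (M - j - 1 - mu)) (TJp (halfq g) j) (lowest_vec g j (j + mu + 1)).

Section EigenVec.
Variables (g : nat) (j M mu : rat).
Hypotheses (M_valid : validM g j M) (mu_in : mu \in VM_idx g j M).

Lemma eigen_vec_weight : j + mu + 1 + (Num.truncn (M - j - 1 - mu))%:R = M.
Proof.
move: M_valid mu_in; rewrite /validM mem_VM_idx => M_nat /andP [/andP [_ mui] mu_le].
rewrite truncnK; first by ring.
rewrite natrEint (_ : M - j - 1 - mu = M - (j + 1 - halfq g) - (mu + halfq g)); last by ring.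
by rewrite (rpredB (intr_nat M_nat) mui) /=; lra.
Qed.

Lemma eigen_vec_diag : diag_supp (VM_idx g j M) M (eigen_vec g j M mu).
Proof.
by have := iter_TJp_diag (k := Num.truncn (M - j - 1 - mu)) (@lowest_vec_diag g j (j + mu + 1));
  rewrite eigen_vec_weight.
Qed.

Lemma TQ_eigen_vec : TQ (halfq g) j (eigen_vec g j M mu) = tscale (lam j mu) (eigen_vec g j M mu).
Proof.
by apply: TQ_iter_TJp; apply: TQ_lowest_vec; move: mu_in; rewrite mem_VM_idx => /andP [].
Qed.

Lemma eigen_vec_bottom : - (1 / 2) <= j -> eigen_vec g j M mu (- halfq g) (M + halfq g) != 0.
Proof.
move=> j_ge; have Fmu : Fbas (halfq g) mu by move: mu_in; rewrite mem_VM_idx => /andP [].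
have Dm : Dbas j (j + mu + 1 + halfq g).
  move: (Fmu) => /andP [/andP [mu_ge _] mui].
  rewrite /Dbas (_ : j + mu + 1 + halfq g - j = mu + halfq g + 1); last by ring.
  by rewrite rpredD ?rpred1 // andbT; lra.
have := @iter_TJp_bottom g j (lowest_vec g j (j + mu + 1)) _
  (Num.truncn (M - j - 1 - mu)) j_ge Dm.
rewrite lowest_vec_bottom // oner_neq0 => /(_ isT).
set k := Num.truncn _.
rewrite (_ : j + mu + 1 + halfq g + k%:R = j + mu + 1 + k%:R + halfq g); last by ring.
by rewrite eigen_vec_weight.
Qed.

End EigenVec.

(** * Independence and spanning *)

Lemma lincomb_cons (I : Type) x s c (F : I -> tvec) :
  lincomb (x :: s) c F = tadd (tscale (c x) (F x)) (lincomb s c F).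
Proof. by apply: tvecP => a b; rewrite /lincomb big_cons taddE tscaleE. Qed.

Section Eigenvectors.
Variable T : tvec -> tvec.
Hypotheses (TD : forall w1 w2, T (tadd w1 w2) = tadd (T w1) (T w2))
           (TZ : forall c w, T (tscale c w) = tscale c (T w)).

Lemma T0 : T tzero = tzero.
Proof.
have zero_scale w : tscale 0 w = tzero by apply: tvecP => a b; rewrite tscaleE mul0r.
by rewrite -(zero_scale tzero) TZ zero_scale.
Qed.

Lemma lincombT (I : Type) (s : seq I) c F :
  T (lincomb s c F) = lincomb s c (fun i => T (F i)).
Proof.
elim: s => [|x s IH]; last by rewrite !lincomb_cons TD TZ IH.
have lincomb_nil G : lincomb [::] c G = tzero.
  by apply: tvecP => a b; rewrite /lincomb big_nil.
by rewrite !lincomb_nil T0.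
Qed.

Variables (I : eqType) (f : I -> tvec) (l : I -> algC).

Lemma lincomb_eigen_shift x s c :
    (forall i, i \in x :: s -> T (f i) = tscale (l i) (f i)) ->
  lincomb (x :: s) c f = tzero -> lincomb s (fun i => c i * (l i - l x)) f = tzero.
Proof.
move=> f_eig comb0.
have Tcomb0 : lincomb (x :: s) (fun i => c i * l i) f = tzero.
  rewrite -T0 -comb0 lincombT; apply: tvecP => a b; apply: eq_big_seq => i i_in.
  by rewrite f_eig // tscaleE mulrA.
apply: tvecP => a b.
move: (congr1 (fun w => w a b) Tcomb0) (congr1 (fun w => w a b) comb0).
rewrite /lincomb /tzero !big_cons => /eqP e1 /eqP e2.
move: e1 e2; rewrite addrC addr_eq0 => /eqP e1; rewrite addrC addr_eq0 => /eqP e2.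
have -> : \sum_(i <- s) c i * (l i - l x) * f i a b =
          \sum_(i <- s) c i * l i * f i a b - l x * \sum_(i <- s) c i * f i a b.
  by rewrite mulr_sumr -sumrB; apply: eq_bigr => i _; ring.
by rewrite e1 e2; ring.
Qed.

Lemma eigenvectors_free s c :
    uniq s -> {in s &, injective l} ->
    (forall i, i \in s -> T (f i) = tscale (l i) (f i)) ->
    (forall i, i \in s -> f i <> tzero) ->
  lincomb s c f = tzero -> forall i, i \in s -> c i = 0.
Proof.
elim: s c => [|x s IH] c //= /andP [x_out s_uniq] l_inj f_eig f_neq0 comb0.
have s_sub i : i \in s -> i \in x :: s by rewrite inE => ->; rewrite orbT.
have cs0 i : i \in s -> c i = 0.
  move=> i_s; have /eqP := IH _ s_uniq (sub_in2 s_sub l_inj) (fun i h => f_eig i (s_sub i h))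
    (fun i h => f_neq0 i (s_sub i h)) (lincomb_eigen_shift f_eig comb0) i i_s.
  rewrite mulf_eq0 subr_eq0 => /orP [/eqP // | /eqP /(l_inj _ _ (s_sub _ i_s) (mem_head _ _)) i_x].
  by move: x_out; rewrite -i_x i_s.
move=> i; rewrite inE => /orP [/eqP -> | /cs0 //].
have [// | cx_neq0] := eqVneq (c x) 0; exfalso; apply: (f_neq0 x (mem_head _ _)).
apply: tvecP => a b; have := congr1 (fun w => w a b) comb0.
rewrite /lincomb /tzero big_cons big1_seq => [|y /andP [_ /cs0 ->]]; last by rewrite mul0r.
by rewrite addr0 => /eqP; rewrite mulf_eq0 (negbTE cx_neq0) => /eqP.
Qed.

End Eigenvectors.

Lemma lam_inj g j M : (2 * j) \is a Num.int -> halfq g - 1 < j ->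
  {in VM_idx g j M &, injective (lam j)}.
Proof.
move=> j2_int j_gt x y; rewrite !mem_VM_idx => /andP [/andP [/andP [x_ge _] _] _].
move=> /andP [/andP [/andP [y_ge _] _] _] /oppr_inj /fmorph_inj lam_eq.
have : (x - y) * (2 * j + x + y + 1) = (j + x) * (j + x + 1) - (j + y) * (j + y + 1).
  by ring.
rewrite lam_eq subrr => /eqP; rewrite mulf_eq0 subr_eq0 => /orP [/eqP // | /eqP sum0].
(* 2j - 2gamma + 1 is an integer > -1, hence >= 0, so 2j + x + y + 1 > 0. *)
have : 0 <= 2 * j - g%:R + 1.
  by apply: intr_gtN1_ge0; [rewrite rpredD ?rpredB ?natr_int | have := halfqD g; lra].
by have := halfqD g; lra.
Qed.

Section DiagSpan.
Variables (s : seq rat) (M : rat) (f : rat -> tvec).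

Definition diag_mx : 'M[algC]_(size s) := \matrix_(i, k) f s`_i s`_k (M - s`_k).
Definition diag_row (w : tvec) : 'rV[algC]_(size s) := \row_k w s`_k (M - s`_k).
Definition row_coord (v : 'rV[algC]_(size s)) (mu : rat) : algC :=
  \sum_(i < size s) (if s`_i == mu then v 0 i else 0).
Definition diag_coords (w : tvec) : rat -> algC :=
  row_coord (diag_row w *m invmx diag_mx).

Hypotheses (s_uniq : uniq s) (f_diag : forall mu, mu \in s -> diag_supp s M (f mu)).

Lemma row_coord_nth v (i : 'I_(size s)) : row_coord v s`_i = v 0 i.
Proof.
rewrite /row_coord (bigD1 i) //= eqxx big1 ?addr0 // => k k_neq.
by rewrite nth_uniq // -[(k : nat) == i]/(k == i) (negbTE k_neq).
Qed.

Lemma lincomb_row_coord v (k : 'I_(size s)) :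
  lincomb s (row_coord v) f s`_k (M - s`_k) = (v *m diag_mx) 0 k.
Proof.
rewrite /lincomb (big_nth 0) big_mkord !mxE; apply: eq_bigr => i _.
by rewrite row_coord_nth mxE.
Qed.

Lemma lincomb_diag_off c a b : ~~ ((a \in s) && (b == M - a)) -> lincomb s c f a b = 0.
Proof.
move=> off; rewrite /lincomb big1_seq // => mu /andP [_ mu_in].
suff -> : f mu a b = 0 by rewrite mulr0.
by apply/eqP; apply: contraNT off; apply: f_diag.
Qed.

Lemma mem_nth_ord a : a \in s -> exists k : 'I_(size s), a = s`_k.
Proof.
move=> a_in; have k_lt : (index a s < size s)%N by rewrite index_mem.
by exists (Ordinal k_lt); rewrite nth_index.
Qed.

Hypothesis f_free : forall c, lincomb s c f = tzero -> forall mu, mu \in s -> c mu = 0.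

Lemma diag_mx_unit : diag_mx \in unitmx.
Proof.
rewrite unitmxE unitfE; apply/negP => /det0P [v v_neq0 v_ker].
have comb0 : lincomb s (row_coord v) f = tzero.
  apply: tvecP => a b; rewrite /tzero.
  have [/andP [a_in /eqP ->] | off] := boolP ((a \in s) && (b == M - a)).
    by have [k ->] := mem_nth_ord a_in; rewrite lincomb_row_coord v_ker mxE.
  exact: lincomb_diag_off.
move/eqP: v_neq0; apply; apply/rowP => i; rewrite mxE -row_coord_nth.
exact: f_free comb0 _ (mem_nth _ (ltn_ord i)).
Qed.

Lemma diag_coordsK w : diag_supp s M w -> lincomb s (diag_coords w) f = w.
Proof.
move=> w_diag; apply: tvecP => a b.
have [/andP [a_in /eqP ->] | off] := boolP ((a \in s) && (b == M - a)).
  have [k ->] := mem_nth_ord a_in.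
  by rewrite lincomb_row_coord mulmxKV ?diag_mx_unit // mxE.
rewrite lincomb_diag_off //; apply/esym/eqP; apply: contraNT off; exact: w_diag.
Qed.

End DiagSpan.

Definition slice (M : rat) (w : tvec) : tvec := fun a b => if a + b == M then w a b else 0.

Lemma slice_diag g j M w : (forall a b, w a b != 0 -> Fbas (halfq g) a && Dbas j b) ->
  diag_supp (VM_idx g j M) M (slice M w).
Proof.
move=> w_bas a b; rewrite /slice; case: ifP => [/eqP ab_eq | _]; last by rewrite eqxx.
move=> /w_bas /andP [Fa /andP [b_ge _]]; rewrite mem_VM_idx Fa -ab_eq /=.
by apply/andP; split; [lra | apply/eqP; ring].
Qed.

Lemma sum_slices (Ms : seq rat) w a b : uniq Ms ->
  (w a b != 0 -> a + b \in Ms) -> w a b = \sum_(M <- Ms) slice M w a b.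
Proof.
move=> Ms_uniq w_supp; rewrite /slice; have [-> | /w_supp ab_in] := eqVneq (w a b) 0.
  by rewrite big1 // => M _; case: ifP.
rewrite (big_rem (a + b)) //= eqxx big1_seq ?addr0 // => M /andP [_ M_in].
by case: eqP => // ab_eq; move: M_in; rewrite -ab_eq mem_rem_uniqF.
Qed.

Lemma slice_lincomb (s : seq (rat * rat)) c (E : rat * rat -> tvec) M :
    (forall i a b, i \in s -> E i a b != 0 -> a + b = i.1) ->
  slice M (lincomb s c E) =
  lincomb [seq i.2 | i <- s & i.1 == M] (fun mu => c (M, mu)) (fun mu => E (M, mu)).
Proof.
move=> E_weight; apply: tvecP => a b; rewrite /slice /lincomb big_map big_filter.
have E_off i : i \in s -> a + b != i.1 -> E i a b = 0.
  by move=> i_in ab_neq; apply/eqP; apply: contraNT ab_neq => /(E_weight _ _ _ i_in) ->.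
case: eqP => [ab_eq | /eqP ab_neq].
  rewrite [RHS]big_mkcond; apply: eq_big_seq => -[M' mu] i_in /=.
  by case: eqP => [-> // | /eqP M'_neq]; rewrite E_off ?mulr0 ?ab_eq // eq_sym.
rewrite big1_seq // => -[M' mu] /andP [/eqP /= M'_eq i_in]; subst M'.
by rewrite E_off ?mulr0.
Qed.

Lemma lincomb_flatten (Ms : seq rat) (t : rat -> seq rat) c (E : rat * rat -> tvec) a b :
  lincomb (flatten [seq [seq (M, mu) | mu <- t M] | M <- Ms]) c E a b =
  \sum_(M <- Ms) lincomb (t M) (fun mu => c (M, mu)) (fun mu => E (M, mu)) a b.
Proof. by rewrite /lincomb big_flatten big_map; apply: eq_bigr => M _; rewrite big_map. Qed.

Definition eigen_basis (g : nat) (j : rat) (i : rat * rat) : tvec := eigen_vec g j i.1 i.2.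

Section Diagonalisation.
Variables (g : nat) (j : rat).
Hypotheses (j_ge : - (1 / 2) <= j) (j2_int : (2 * j) \is a Num.int) (j_gt : halfq g - 1 < j).

Lemma eigen_vec_free M (t : seq rat) c : validM g j M ->
    uniq t -> {subset t <= VM_idx g j M} ->
  lincomb t c (eigen_vec g j M) = tzero -> forall mu, mu \in t -> c mu = 0.
Proof.
move=> M_valid t_uniq t_sub; apply: (eigenvectors_free (l := lam j) (@TQD (halfq g) j) (@TQZ (halfq g) j) t_uniq).
- by move=> x y /t_sub x_in /t_sub y_in; apply: (lam_inj j2_int j_gt x_in y_in).
- by move=> mu /t_sub mu_in; apply: (TQ_eigen_vec mu_in).
move=> mu /t_sub mu_in f0; move: (eigen_vec_bottom M_valid mu_in j_ge).
by rewrite f0 /tzero eqxx.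
Qed.

Lemma eigen_vec_span M w : validM g j M -> diag_supp (VM_idx g j M) M w ->
  lincomb (VM_idx g j M) (diag_coords (VM_idx g j M) M (eigen_vec g j M) w) (eigen_vec g j M) = w.
Proof.
move=> M_valid; apply: diag_coordsK; first exact: VM_idx_uniq.
  by move=> mu; apply: eigen_vec_diag.
by move=> c; apply: eigen_vec_free; rewrite ?VM_idx_uniq.
Qed.

Lemma eigen_basis_weight i a b : validM g j i.1 -> i.2 \in VM_idx g j i.1 ->
  eigen_basis g j i a b != 0 -> a + b = i.1.
Proof. by move=> M_valid mu_in /(eigen_vec_diag M_valid mu_in) /andP [_ /eqP ->]; ring. Qed.

Lemma eigen_basis_free (s : seq (rat * rat)) c :
    uniq s -> all (fun i => validM g j i.1 && (i.2 \in VM_idx g j i.1)) s ->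
  lincomb s c (eigen_basis g j) = tzero -> forall i, i \in s -> c i = 0.
Proof.
move=> s_uniq /allP s_valid comb0 [M mu] i_in.
have /andP [M_valid mu_in] : validM g j M && (mu \in VM_idx g j M) := s_valid _ i_in.
have E_weight i a b : i \in s -> eigen_basis g j i a b != 0 -> a + b = i.1.
  by move=> /s_valid /andP [? ?]; apply: eigen_basis_weight.
have := @slice_lincomb s c _ M E_weight; rewrite comb0.
rewrite (_ : slice M tzero = tzero); last by apply: tvecP => a b; rewrite /slice; case: ifP.
move=> /esym comb0_M; apply: (eigen_vec_free M_valid _ _ comb0_M).
- rewrite map_inj_in_uniq ?filter_uniq // => -[M1 mu1] [M2 mu2].
  by rewrite !mem_filter /= => /andP [/eqP -> _] /andP [/eqP -> _] ->.
- move=> nu /mapP [[M' nu']]; rewrite mem_filter /= => /andP [/eqP M'_eq /s_valid] + ->.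
  by rewrite M'_eq => /andP [].
- by apply/mapP; exists (M, mu); rewrite ?mem_filter ?eqxx.
Qed.

Lemma eigen_basis_span w : in_tensor (halfq g) j w ->
  exists (s : seq (rat * rat)) (c : rat * rat -> algC),
    all (fun i => validM g j i.1 && (i.2 \in VM_idx g j i.1)) s /\
    w = lincomb s c (eigen_basis g j).
Proof.
move=> [w_bas [s0 s0_supp]].
set Ms := undup [seq i.1 + i.2 | i <- s0 & Fbas (halfq g) i.1 && Dbas j i.2].
have Ms_valid M : M \in Ms -> validM g j M.
  rewrite mem_undup => /mapP [[a b]]; rewrite mem_filter /= => /andP [/andP [Fa Db] _] ->.
  exact: validM_sum.
exists (flatten [seq [seq (M, mu) | mu <- VM_idx g j M] | M <- Ms]).
exists (fun i => diag_coords (VM_idx g j i.1) i.1 (eigen_vec g j i.1) (slice i.1 w) i.2).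
split.
  apply/allP => _ /flattenP [_ /mapP [M M_in ->] /mapP [mu mu_in ->]].
  by rewrite /= Ms_valid.
apply: tvecP => a b; rewrite lincomb_flatten (@sum_slices Ms) ?undup_uniq //.
  apply: eq_big_seq => M M_in.
  by have := eigen_vec_span (Ms_valid M M_in) (slice_diag (M := M) w_bas) => /(congr1 (fun f => f a b)) <-.
move=> ab_neq0; rewrite mem_undup; apply/mapP; exists (a, b) => //.
by rewrite mem_filter w_bas // s0_supp.
Qed.

End Diagonalisation.

Theorem mainTheorem5 (g : nat) (j : rat) :
  (0 < g)%N -> - (1 / 2) <= j -> (2 * j) \is a Num.int -> halfq g - 1 < j ->
  (forall M : rat, validM g j M ->
     exists f : rat -> tvec,
       [/\ forall mu, mu \in VM_idx g j M ->
              in_VM g j M (f mu) /\ TQ (halfq g) j (f mu) = tscale (lam j mu) (f mu),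
           {in VM_idx g j M &, injective (lam j)},
           forall c : rat -> algC, lincomb (VM_idx g j M) c f = tzero ->
              forall mu, mu \in VM_idx g j M -> c mu = 0
         & forall w, in_VM g j M w ->
              exists c : rat -> algC, w = lincomb (VM_idx g j M) c f]) /\
  (exists E : rat * rat -> tvec,
     [/\ forall i, validM g j i.1 -> i.2 \in VM_idx g j i.1 ->
            in_tensor (halfq g) j (E i) /\
            exists l : algC, TQ (halfq g) j (E i) = tscale l (E i),
         forall (s : seq (rat * rat)) (c : rat * rat -> algC),
            uniq s -> all (fun i => validM g j i.1 && (i.2 \in VM_idx g j i.1)) s ->
            lincomb s c E = tzero -> forall i, i \in s -> c i = 0
       & forall w, in_tensor (halfq g) j w ->
            exists (s : seq (rat * rat)) (c : rat * rat -> algC),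
              all (fun i => validM g j i.1 && (i.2 \in VM_idx g j i.1)) s /\
              w = lincomb s c E]).
Proof.
move=> _ j_ge j2_int j_gt; split=> [M M_valid | ].
  exists (eigen_vec g j M); split.
  - move=> mu mu_in; split; last exact: TQ_eigen_vec.
    by apply/in_VMP; apply: eigen_vec_diag.
  - exact: lam_inj.
  - by move=> c; apply: eigen_vec_free; rewrite ?VM_idx_uniq.
  - by move=> w /in_VMP w_diag; eexists; symmetry; apply: eigen_vec_span.
exists (eigen_basis g j); split.
- move=> [M mu] /= M_valid mu_in; split; last by exists (lam j mu); apply: TQ_eigen_vec.
  exact: diag_in_tensor M_valid (eigen_vec_diag M_valid mu_in).
- exact: eigen_basis_free.
- exact: eigen_basis_span.
Qed.
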